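(* Let $i\in\{1,2\}$ and consider $\mathrm{SU}(2)\times\mathbb{R}$ with the sub-Riemannian metric $d_i$ and its geodesics $\tilde\gamma_i(\alpha_1,\alpha_2,\alpha_3,\beta;t)$, $t\in\mathbb{R}$, as described in the context, with $\alpha_2\neq\pm1$. Then $\hat t>0$ is a conjugate time along $\tilde\gamma_i$ if and only if $$\sin\frac{w_i\hat t}{2}\Bigl(\sin\frac{w_i\hat t}{2}-\frac{w_i\hat t}{2}\cos\frac{w_i\hat t}{2}\Bigr)=0,$$ where $w_2=\sqrt{1-\alpha_2^2+\beta^2}$ and $w_1=\sqrt{1-\alpha_2^2+(\beta-\alpha_2)^2}$.
   Context: $\mathrm{SU}(2)\times\mathbb{R}$ is the group of matrices $(A,B,v)=\begin{pmatrix}A&B&0\\-\overline{B}&\overline{A}&0\\0&0&e^v\end{pmatrix}$, $A,B\in\mathbb{C}$, $|A|^2+|B|^2=1$, $v\in\mathbb{R}$, with identity $\mathrm{Id}$. Let $E_1=\tfrac12(e_{12}-e_{21})$, $E_2=\tfrac{i}{2}(e_{12}+e_{21})$, $E_3=\tfrac{i}{2}(e_{11}-e_{22})$, $E_4=e_{33}$ ($e_{jk}$ the $3\times3$ matrix units). Put $e_1=E_1$, $e_3=E_2$, $e_4=E_3$, and $e_2=E_4-E_3$ for $i=1$, $e_2=E_4$ for $i=2$. The metric $d_i$ is the left-invariant sub-Riemannian metric defined by the left-invariant distribution with value $\mathrm{span}(e_1,e_2,e_3)$ at $\mathrm{Id}$ and inner product making $e_1,e_2,e_3$ orthonormal. Its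 arclength-parametrized geodesics from $\mathrm{Id}$ are $\tilde\gamma_i(\alpha_1,\alpha_2,\alpha_3,\beta;t)=\exp(t(\alpha_1e_1+\alpha_2e_2+\alpha_3e_3+\beta e_4))\exp(-t\beta e_4)$ with $(\alpha_1,\alpha_2,\alpha_3)\in\mathbb{S}^2$, $\beta\in\mathbb{R}$; this defines the exponential map $\mathrm{Exp}_i:C\times\mathbb{R}_+\to\mathrm{SU}(2)\times\mathbb{R}$, $(\lambda,t)\mapsto\tilde\gamma_i(\lambda;t)$, where $C=\mathbb{S}^2\times\mathbb{R}\ni\lambda=(\alpha_1,\alpha_2,\alpha_3,\beta)$. A time $\hat t>0$ is a conjugate time along $\tilde\gamma_i(\lambda;\cdot)$ if the differential of $\mathrm{Exp}_i$ at $(\lambda,\hat t)$ is degenerate. *)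

From HB Require Import structures.
From mathcomp Require Import all_boot all_order all_algebra.
From mathcomp Require Import all_classical all_reals all_analysis.
Set Implicit Arguments. Unset Strict Implicit. Unset Printing Implicit Defensive.
Import Order.TTheory GRing.Theory Num.Theory numFieldNormedType.Exports.
Local Open Scope ring_scope.

(* Complex 3x3 matrices X + iY are represented by their realification,
   the real 6x6 matrix [[X, -Y], [Y, X]]; this is an injective
   R-algebra homomorphism commuting with the matrix exponential. *)
Definition cmx (R : realType) (X Y : 'M[R]_3) : 'M[R]_6 := block_mx X (- Y) Y X.

Definition unit3 (R : realType) (j k : nat) : 'M[R]_3 :=
  delta_mx (inord j.-1) (inord k.-1).

Definition E1 (R : realType) : 'M[R]_6 := cmx (2^-1 *: (unit3 R 1 2 - unit3 R 2 1)) 0.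
Definition E2 (R : realType) : 'M[R]_6 := cmx 0 (2^-1 *: (unit3 R 1 2 + unit3 R 2 1)).
Definition E3 (R : realType) : 'M[R]_6 := cmx 0 (2^-1 *: (unit3 R 1 1 - unit3 R 2 2)).
Definition E4 (R : realType) : 'M[R]_6 := cmx (unit3 R 3 3) 0.

Definition ee1 (R : realType) : 'M[R]_6 := E1 R.
Definition ee2 (R : realType) (i : nat) : 'M[R]_6 :=
  if i == 1%N then E4 R - E3 R else E4 R.
Definition ee3 (R : realType) : 'M[R]_6 := E2 R.
Definition ee4 (R : realType) : 'M[R]_6 := E3 R.

Definition mexp (R : realType) (M : 'M[R]_6) : 'M[R]_6 :=
  limn (series (fun k : nat => (k`!%:R)^-1 *: M ^+ k)).

Definition crd (R : realType) (p : 'rV[R]_5) (k : nat) : R := p ord0 (inord k).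

(* The exponential map Exp_i, extended to all of R^5 (a neighbourhood of
   C x R_+ = S^2 x R x R_+), with p = (alpha1, alpha2, alpha3, beta, t). *)
Definition Expi (R : realType) (i : nat) (p : 'rV[R]_5) : 'M[R]_6 :=
  let a1 := crd p 0 in let a2 := crd p 1 in let a3 := crd p 2 in
  let b := crd p 3 in let t := crd p 4 in
  mexp (t *: (a1 *: ee1 R + a2 *: ee2 R i + a3 *: ee3 R + b *: ee4 R))
  *m mexp ((- (t * b)) *: ee4 R).

(* tangent space of C x R_+ = S^2 x R x R_+ at p (p with alpha in S^2) *)
Definition tangentC (R : realType) (p v : 'rV[R]_5) : Prop :=
  crd p 0 * crd v 0 + crd p 1 * crd v 1 + crd p 2 * crd v 2 = 0.

(* t > 0 is a conjugate time along gamma_i(lambda; .) : the differential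
   of Exp_i at (lambda, t) (restricted to the tangent space of C x R_+)
   is degenerate, i.e. has a nontrivial kernel. *)
Definition conjugate_time (R : realType) (i : nat) (a1 a2 a3 b t : R) : Prop :=
  let p : 'rV[R]_5 := \row_(k < 5) [:: a1; a2; a3; b; t]`_k in
  exists v : 'rV[R]_5, v != 0 /\ tangentC p v /\ ('d (Expi i) p : 'rV[R]_5 -> 'M[R]_6) v = 0.

Definition wi (R : realType) (i : nat) (a2 b : R) : R :=
  if i == 1%N then Num.sqrt (1 - a2 ^+ 2 + (b - a2) ^+ 2)
  else Num.sqrt (1 - a2 ^+ 2 + b ^+ 2).

(* The matrices 2 E1, 2 E2, 2 E3 multiply like the quaternion units i, j, k,
   so each exponent in Exp_i is a pure quaternion (plus a multiple of E4)
   and Rodrigues' formula gives Exp_i in closed form: with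
   y = t (a1, a3, b - c a2) / 2 (c = 1 if i = 1, c = 0 if i = 2),
   rho = |y| = w_i t / 2 and theta = t b / 2,
     Exp_i = (cos rho + (sin rho / rho) y) (cos theta - k sin theta)
   on the SU(2) factor and e^(t a2) on the R factor.  Differentiating and
   cancelling the unit quaternion cos theta - k sin theta, the kernel of the
   differential is cut out by four scalar equations and d(t a2) = 0.  If
   sin rho <> 0 and sin rho <> rho cos rho they only admit v = 0 on the
   tangent space; otherwise (a3, 0, -a1, 0, 0), resp. (a3, 0, -a1, 2/t, 0),
   is a nonzero kernel vector. *)

From HB Require Import structures.
From mathcomp Require Import all_boot all_order all_algebra.
From mathcomp Require Import all_classical all_reals all_analysis.
From mathcomp Require Import ring lra.
Import Order.TTheory GRing.Theory Num.Theory numFieldNormedType.Exports.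
Set Implicit Arguments. Unset Strict Implicit. Unset Printing Implicit Defensive.
Local Open Scope classical_set_scope.
Local Open Scope ring_scope.

Section QuaternionMatrices.
Variable R : realType.
Implicit Types a b c d e : R.

Definition quat_re a b e : 'M[R]_3 := \matrix_(j < 3, k < 3)
  match j : nat, k : nat with
  | 0%N, 0%N | 1%N, 1%N => a | 0%N, 1%N => b | 1%N, 0%N => - b
  | 2%N, 2%N => e | _, _ => 0
  end.

Definition quat_im c d : 'M[R]_3 := \matrix_(j < 3, k < 3)
  match j : nat, k : nat with
  | 0%N, 0%N => d | 0%N, 1%N | 1%N, 0%N => c | 1%N, 1%N => - d | _, _ => 0
  end.

(* [quat a b c d e] = a (e11 + e22) + 2 (b E1 + c E2 + d E3) + e E4. *)
Definition quat a b c d e : 'M[R]_6 := cmx (quat_re a b e) (quat_im c d).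

Local Ltac mx3_ring := apply/matrixP;
  case=> [[|[|[|?]]] ?] //; case=> [[|[|[|?]]] ?] //;
  rewrite /quat_re /quat_im !mxE ?big_ord_recr ?big_ord0 /= ?mxE /=; ring.

Lemma quat_reM a b c d e a' b' c' d' e' :
  quat_re a b e *m quat_re a' b' e' - quat_im c d *m quat_im c' d' =
  quat_re (a * a' - b * b' - c * c' - d * d')
          (a * b' + b * a' + c * d' - d * c') (e * e').
Proof. mx3_ring. Qed.

Lemma quat_imM a b c d e a' b' c' d' e' :
  quat_re a b e *m quat_im c' d' + quat_im c d *m quat_re a' b' e' =
  quat_im (a * c' - b * d' + c * a' + d * b') (a * d' + b * c' - c * b' + d * a').
Proof. mx3_ring. Qed.

Lemma quat_reD a b e a' b' e' :
  quat_re a b e + quat_re a' b' e' = quat_re (a + a') (b + b') (e + e').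
Proof. mx3_ring. Qed.

Lemma quat_imD c d c' d' : quat_im c d + quat_im c' d' = quat_im (c + c') (d + d').
Proof. mx3_ring. Qed.

Lemma quat_reZ k a b e : k *: quat_re a b e = quat_re (k * a) (k * b) (k * e).
Proof. mx3_ring. Qed.

Lemma quat_imZ k c d : k *: quat_im c d = quat_im (k * c) (k * d).
Proof. mx3_ring. Qed.

Lemma quatM a b c d e a' b' c' d' e' :
  quat a b c d e *m quat a' b' c' d' e' =
  quat (a * a' - b * b' - c * c' - d * d') (a * b' + b * a' + c * d' - d * c')
       (a * c' - b * d' + c * a' + d * b') (a * d' + b * c' - c * b' + d * a')
       (e * e').
Proof.
rewrite /quat /cmx (@mulmx_block _ 3 3 3 3 3 3) !mulmxN !mulNmx.
rewrite -(quat_reM a b c d e) -(quat_imM a b c d e a' b' c' d' e').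
by rewrite opprD; f_equal; rewrite addrC.
Qed.

Lemma quatD a b c d e a' b' c' d' e' :
  quat a b c d e + quat a' b' c' d' e' =
  quat (a + a') (b + b') (c + c') (d + d') (e + e').
Proof.
by rewrite /quat /cmx (@add_block_mx _ 3 3 3 3) quat_reD quat_imD -opprD quat_imD.
Qed.

Lemma quatZ k a b c d e :
  k *: quat a b c d e = quat (k * a) (k * b) (k * c) (k * d) (k * e).
Proof. by rewrite /quat /cmx (@scale_block_mx _ 3 3 3 3) quat_reZ quat_imZ scalerN quat_imZ. Qed.

Lemma quatN a b c d e : - quat a b c d e = quat (- a) (- b) (- c) (- d) (- e).
Proof. by rewrite -scaleN1r quatZ !mulN1r. Qed.

Lemma quat_basis a b c d e : quat a b c d e =
  a *: quat 1 0 0 0 0 + b *: quat 0 1 0 0 0 + c *: quat 0 0 1 0 0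
  + d *: quat 0 0 0 1 0 + e *: quat 0 0 0 0 1.
Proof. by rewrite !quatZ !quatD; congr quat; ring. Qed.

Lemma quat0 : quat 0 0 0 0 0 = 0.
Proof.
have re0 : quat_re 0 0 0 = 0 by mx3_ring.
have im0 : quat_im 0 0 = 0 by mx3_ring.
by rewrite /quat /cmx re0 im0 oppr0 (@block_mx0 _ 3 3 3 3).
Qed.

Lemma quat1 : quat 1 0 0 0 1 = 1.
Proof.
have re1 : quat_re 1 0 1 = 1%:M by mx3_ring.
have im0 : quat_im 0 0 = 0 by mx3_ring.
by rewrite /quat /cmx re1 im0 oppr0 -(@scalar_mx_block _ 3 3).
Qed.

Lemma quat_eq0 a b c d e : quat a b c d e = 0 ->
  [/\ a = 0, b = 0, c = 0, d = 0 & e = 0].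
Proof.
move=> q0; have entry (j k : 'I_(3 + 3)) := congr1 (fun M : 'M[R]_(3 + 3) => M j k) q0.
pose o0 := @Ordinal 3 0 isT; pose o1 := @Ordinal 3 1 isT; pose o2 := @Ordinal 3 2 isT.
have := entry (lshift 3 o0) (lshift 3 o0); have := entry (lshift 3 o0) (lshift 3 o1).
have := entry (lshift 3 o0) (rshift 3 o1); have := entry (lshift 3 o0) (rshift 3 o0).
have := entry (lshift 3 o2) (lshift 3 o2).
rewrite /quat /cmx ?block_mxEul ?block_mxEur !mxE /= => ? /eqP + /eqP + ? ?.
by rewrite !oppr_eq0 => /eqP ? /eqP ?.
Qed.

Lemma quat_rotK C S : C ^+ 2 + S ^+ 2 = 1 ->
  quat C 0 0 (- S) 1 *m quat C 0 0 S 1 = 1.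
Proof. by move=> CS; rewrite quatM -quat1; congr quat; try ring; rewrite -CS; ring. Qed.

Local Ltac mx3_unit := apply/matrixP;
  case=> [[|[|[|?]]] ?] //; case=> [[|[|[|?]]] ?] //;
  rewrite /quat_re /quat_im /unit3 !mxE /= -?(inj_eq val_inj) /= ?inordK //=; ring.

Lemma E1_quat : E1 R = quat 0 2^-1 0 0 0.
Proof. by rewrite /E1 /quat; congr cmx; mx3_unit. Qed.

Lemma E2_quat : E2 R = quat 0 0 2^-1 0 0.
Proof. by rewrite /E2 /quat; congr cmx; mx3_unit. Qed.

Lemma E3_quat : E3 R = quat 0 0 0 2^-1 0.
Proof. by rewrite /E3 /quat; congr cmx; mx3_unit. Qed.

Lemma E4_quat : E4 R = quat 0 0 0 0 1.
Proof. by rewrite /E4 /quat; congr cmx; mx3_unit. Qed.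

End QuaternionMatrices.

Section Rodrigues.
Variable R : realType.
Implicit Types x th tau : R.

Definition cos_num x k := (~~ odd k)%:R * (-1) ^+ k./2 * x ^+ k.
Definition sin_num x k := (odd k)%:R * (-1) ^+ k.-1./2 * x ^+ k.

Lemma cos_coeff_num x k : cos_coeff x k = cos_num x k / k`!%:R.
Proof. by []. Qed.

Lemma sin_coeff_num x k : sin_coeff x k = sin_num x k / k`!%:R.
Proof. by []. Qed.

Lemma cos_numS x k : cos_num x k.+1 = - x * sin_num x k.
Proof.
rewrite /cos_num /sin_num /= negbK exprS.
case: (boolP (odd k)) => [k_odd|_]; last by rewrite !mul0r mulr0.
have [m ->] : exists m, k = m.*2.+1.
  by exists k./2; rewrite -[k in LHS]odd_double_half k_odd add1n.
by rewrite /= doubleK exprS; ring.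
Qed.

Lemma sin_numS x k : sin_num x k.+1 = x * cos_num x k.
Proof. by rewrite /cos_num /sin_num /= exprS; ring. Qed.

Lemma quat_axisX th tau n1 n2 n3 k : n1 ^+ 2 + n2 ^+ 2 + n3 ^+ 2 = 1 ->
  quat 0 (th * n1) (th * n2) (th * n3) tau ^+ k =
  quat (cos_num th k) (sin_num th k * n1) (sin_num th k * n2) (sin_num th k * n3)
       (tau ^+ k).
Proof.
move=> n_unit; elim: k => [|k IHk].
  by rewrite expr0 /cos_num /sin_num /= !mul0r !mul1r expr0 quat1.
rewrite exprSr IHk -mulmxE quatM cos_numS sin_numS exprSr.
by congr quat; try ring; rewrite -[RHS]mulr1 -n_unit; ring.
Qed.

Lemma mexp_quat_axis th tau n1 n2 n3 : n1 ^+ 2 + n2 ^+ 2 + n3 ^+ 2 = 1 ->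
  mexp (quat 0 (th * n1) (th * n2) (th * n3) tau) =
  quat (cos th) (sin th * n1) (sin th * n2) (sin th * n3) (expR tau).
Proof.
move=> n_unit; rewrite /mexp.
have partial_sums n :
    series (fun k => k`!%:R^-1 *: quat 0 (th * n1) (th * n2) (th * n3) tau ^+ k) n =
    quat (series (cos_coeff th) n) (series (sin_coeff th) n * n1)
         (series (sin_coeff th) n * n2) (series (sin_coeff th) n * n3)
         (series (exp_coeff tau) n).
  elim: n => [|n IHn]; first by rewrite /series /= !big_geq // !mul0r quat0.
  move: IHn; rewrite /series /= !big_nat_recr //= => ->.
  rewrite quat_axisX // quatZ quatD cos_coeff_num sin_coeff_num /exp_coeff /=.
  by congr quat; ring.
rewrite (boolp.funext partial_sums) quat_basis.
under eq_fun do rewrite quat_basis.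
apply: (cvg_lim (@norm_hausdorff _ _)).
have cvg_cos : series (cos_coeff th) @ \oo --> cos th.
  by rewrite unlock; exact: is_cvg_series_cos_coeff.
have cvg_sin : series (sin_coeff th) @ \oo --> sin th.
  by rewrite unlock; exact: is_cvg_series_sin_coeff.
apply: cvgD; [apply: cvgD; [apply: cvgD; [apply: cvgD|]|]|]; apply: cvgZr_tmp.
- exact: cvg_cos.
- exact: cvgMr_tmp.
- exact: cvgMr_tmp.
- exact: cvgMr_tmp.
- exact: is_cvg_series_exp_coeff.
Qed.

Lemma sum_sqr3_eq0 x y z : x ^+ 2 + y ^+ 2 + z ^+ 2 = 0 -> [/\ x = 0, y = 0 & z = 0].
Proof.
move=> /eqP; rewrite paddr_eq0 ?addr_ge0 ?sqr_ge0 // paddr_eq0 ?sqr_ge0 //.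
by rewrite !sqrf_eq0 => /andP[/andP[/eqP-> /eqP->] /eqP->].
Qed.

Lemma mexp_quat_pure r y1 y2 y3 tau : r ^+ 2 = y1 ^+ 2 + y2 ^+ 2 + y3 ^+ 2 ->
  mexp (quat 0 y1 y2 y3 tau) =
  quat (cos r) (sin r / r * y1) (sin r / r * y2) (sin r / r * y3) (expR tau).
Proof.
have [-> /esym|r_neq0 r2] := eqVneq r 0.
  rewrite expr0n /= => /sum_sqr3_eq0 [-> -> ->].
  have -> : quat 0 0 0 0 tau = quat 0 (0 * 1) (0 * 0) (0 * 0) tau by rewrite !mul0r.
  by rewrite mexp_quat_axis ?sin0 ?mul0r ?mulr0 //; ring.
have -> : quat 0 y1 y2 y3 tau = quat 0 (r * (y1 / r)) (r * (y2 / r)) (r * (y3 / r)) tau.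
  by congr quat; field.
rewrite mexp_quat_axis; first by congr quat; rewrite mulrCA mulrC.
by rewrite !expr_div_n -!mulrDl -r2 divff // sqrf_eq0.
Qed.
End Rodrigues.

Definition diff_along {R : realType} {V W : normedModType R}
    (f : V -> W) (x v : V) (df : W) :=
  differentiable f x /\ 'd f x v = df.

Section DiffAlong.
Context {R : realType} {V W : normedModType R}.
Implicit Types (x v : V).

Lemma diff_along_eq (f : V -> W) x v df df' :
  diff_along f x v df -> df = df' -> diff_along f x v df'.
Proof. by move=> ? <-. Qed.

Lemma diff_alongE (f : V -> W) x v df : diff_along f x v df -> 'd f x v = df.
Proof. by case. Qed.

Lemma diff_along_cst (c : W) x v : diff_along (fun=> c) x v 0.
Proof. by split; [exact: differentiable_cst | rewrite diff_cst]. Qed.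

Lemma diff_alongD (f g : V -> W) x v df dg :
  diff_along f x v df -> diff_along g x v dg ->
  diff_along (fun p => f p + g p) x v (df + dg).
Proof. by move=> [fx <-] [gx <-]; split; [exact: differentiableD | rewrite diffD]. Qed.

Lemma diff_alongN (f : V -> W) x v df :
  diff_along f x v df -> diff_along (fun p => - f p) x v (- df).
Proof. by move=> [fx <-]; split; [exact: differentiableN | rewrite diffN]. Qed.

Lemma diff_alongZl (f : V -> R) (c : W) x v (df : R) :
  diff_along f x v df -> diff_along (fun p => f p *: c) x v (df *: c).
Proof. by move=> [fx <-]; split; [exact: differentiableZl | rewrite diffZl]. Qed.
End DiffAlong.

Section DiffAlongReal.
Context {R : realType} {V : normedModType R}.
Implicit Types (x v : V) (f g : V -> R).

Lemma diff_alongM f g x v df dg :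
  diff_along f x v df -> diff_along g x v dg ->
  diff_along (fun p => f p * g p) x v (f x * dg + g x * df).
Proof. by move=> [fx <-] [gx <-]; split; [exact: differentiableM | rewrite diffM]. Qed.

Lemma diff_alongV f x v df : f x != 0 ->
  diff_along f x v df -> diff_along (fun p => (f p)^-1) x v (- df / f x ^+ 2).
Proof.
move=> fx0 [fx <-]; split; first exact: differentiableV.
by rewrite diffV //= mulNr mulrC scaleNr.
Qed.

Lemma diff_along_comp f (h : R -> R) x v df dh :
  diff_along f x v df -> is_derive (f x) 1 h dh ->
  diff_along (fun p => h (f p)) x v (dh * df).
Proof.
move=> [fx <-] hd; have h_der : derivable h (f x) 1 by case: hd.
have hx : differentiable h (f x) by apply/derivable1_diffP.
split; first exact: differentiable_comp.
by rewrite (diff_comp fx hx) /= (deriv1E h_der) /= derive1E derive_val mulrC.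
Qed.

Lemma diff_along_sin f x v df :
  diff_along f x v df -> diff_along (fun p => sin (f p)) x v (cos (f x) * df).
Proof. by move/diff_along_comp; apply; exact: is_derive_sin. Qed.

Lemma diff_along_cos f x v df :
  diff_along f x v df -> diff_along (fun p => cos (f p)) x v (- sin (f x) * df).
Proof. by move/diff_along_comp; apply; exact: is_derive_cos. Qed.

Lemma diff_along_expR f x v df :
  diff_along f x v df -> diff_along (fun p => expR (f p)) x v (expR (f x) * df).
Proof. by move/diff_along_comp; apply; exact: is_derive_expR. Qed.

Lemma diff_along_sqrt f x v df : 0 < f x ->
  diff_along f x v df ->
  diff_along (fun p => Num.sqrt (f p)) x v ((2 * Num.sqrt (f x))^-1 * df).
Proof. by move=> fx_gt0 /diff_along_comp; apply; exact: is_derive1_sqrt. Qed.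
End DiffAlongReal.

Lemma diff_along_crd (R : realType) (x v : 'rV[R]_5) k :
  diff_along (fun p => crd p k) x v (crd v k).
Proof.
have @f : {linear 'rV[R]_5 -> R}.
  by exists (fun N : 'rV[R]_5 => N ord0 (inord k)); do 2![eexists]; do ?[constructor];
     rewrite ?mxE// => ? *; rewrite ?mxE//; move=> ?; rewrite !mxE.
rewrite /crd (_ : (fun _ => _) = f) //.
have f_cont : continuous f by exact: coord_continuous.
by split; [exact/linear_differentiable | rewrite diff_lin].
Qed.

Lemma crd_row (R : realType) (l : seq R) k : (k < 5)%N ->
  crd (\row_(j < 5) l`_j) k = l`_k.
Proof. by move=> k_lt5; rewrite /crd mxE inordK. Qed.

Lemma crd_eq0 (R : realType) (v : 'rV[R]_5) :
  crd v 0 = 0 -> crd v 1 = 0 -> crd v 2 = 0 -> crd v 3 = 0 -> crd v 4 = 0 -> v = 0.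
Proof.
move=> v0 v1 v2 v3 v4; apply/matrixP => j k; rewrite [j]ord1 mxE -[k]inord_val.
by case: k => [[|[|[|[|[|]]]]] ?].
Qed.

Section ExpiClosedForm.
Variables (R : realType) (i : nat).
Implicit Types p : 'rV[R]_5.

Definition tilt : R := if i == 1%N then 1 else 0.
Definition y1 p := crd p 4 * crd p 0 / 2.
Definition y2 p := crd p 4 * crd p 2 / 2.
Definition y3 p := crd p 4 * (crd p 3 - tilt * crd p 1) / 2.
Definition rho p := Num.sqrt (y1 p ^+ 2 + y2 p ^+ 2 + y3 p ^+ 2).
(* At rho p = 0 this is 0, not 1; harmless, since then y1 p = y2 p = y3 p = 0. *)
Definition sinc p := sin (rho p) / rho p.
Definition theta p := crd p 4 * crd p 3 / 2.
Definition tau p := crd p 4 * crd p 1.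

Lemma rho_sqr p : rho p ^+ 2 = y1 p ^+ 2 + y2 p ^+ 2 + y3 p ^+ 2.
Proof. by rewrite sqr_sqrtr // !addr_ge0 ?sqr_ge0. Qed.

Lemma Expi_closed p : Expi i p =
  quat (cos (rho p)) (sinc p * y1 p) (sinc p * y2 p) (sinc p * y3 p) (expR (tau p))
  *m quat (cos (theta p)) 0 0 (- sin (theta p)) 1.
Proof.
have exponent : crd p 4 *: (crd p 0 *: ee1 R + crd p 1 *: ee2 R i + crd p 2 *: ee3 R
    + crd p 3 *: ee4 R) = quat 0 (y1 p) (y2 p) (y3 p) (tau p).
  rewrite /ee1 /ee2 /ee3 /ee4 E1_quat E2_quat E3_quat E4_quat /y1 /y2 /y3 /tau /tilt.
  by case: (i == 1%N); rewrite ?quatN !(quatZ, quatD); congr quat; ring.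
have rotation : (- (crd p 4 * crd p 3)) *: ee4 R =
    quat 0 (theta p * 0) (theta p * 0) (theta p * -1) 0.
  by rewrite /ee4 E3_quat quatZ /theta; congr quat; ring.
rewrite /Expi /= exponent rotation (mexp_quat_pure _ (rho_sqr p)) mexp_quat_axis.
  by rewrite !mulr0 mulrN1 expR0.
by ring.
Qed.
End ExpiClosedForm.

Section ExpiDifferential.
Variables (R : realType) (i : nat) (x v : 'rV[R]_5).
Hypothesis rho_gt0 : 0 < rho i x.

Definition dy1 := (crd v 4 * crd x 0 + crd x 4 * crd v 0) / 2.
Definition dy2 := (crd v 4 * crd x 2 + crd x 4 * crd v 2) / 2.
Definition dy3 := (crd v 4 * (crd x 3 - tilt R i * crd x 1)
                   + crd x 4 * (crd v 3 - tilt R i * crd v 1)) / 2.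
Definition dtheta := (crd v 4 * crd x 3 + crd x 4 * crd v 3) / 2.
Definition dtau := crd v 4 * crd x 1 + crd x 4 * crd v 1.
Definition drho := (y1 x * dy1 + y2 x * dy2 + y3 i x * dy3) / rho i x.
Definition dsinc := (cos (rho i x) - sinc i x) * drho / rho i x.

Definition omega0 := - sin (rho i x) * drho + dtheta * sinc i x * y3 i x.
Definition omega1 := dsinc * y1 x + sinc i x * dy1 - dtheta * sinc i x * y2 x.
Definition omega2 := dsinc * y2 x + sinc i x * dy2 + dtheta * sinc i x * y1 x.
Definition omega3 := dsinc * y3 i x + sinc i x * dy3 - dtheta * cos (rho i x).

Local Ltac diff_along_poly := repeat first
  [ apply: diff_alongD | apply: diff_alongM | apply: diff_alongN
  | apply: diff_along_cst | apply: diff_along_crd ].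

Lemma diff_along_y1 : diff_along (@y1 R) x v dy1.
Proof. eapply diff_along_eq; first by rewrite /y1; diff_along_poly. by rewrite /dy1; ring. Qed.

Lemma diff_along_y2 : diff_along (@y2 R) x v dy2.
Proof. eapply diff_along_eq; first by rewrite /y2; diff_along_poly. by rewrite /dy2; ring. Qed.

Lemma diff_along_y3 : diff_along (y3 i) x v dy3.
Proof. eapply diff_along_eq; first by rewrite /y3; diff_along_poly. by rewrite /dy3; ring. Qed.

Lemma diff_along_theta : diff_along (@theta R) x v dtheta.
Proof.
eapply diff_along_eq; first by rewrite /theta; diff_along_poly.
by rewrite /dtheta; ring.
Qed.

Lemma diff_along_tau : diff_along (@tau R) x v dtau.
Proof. eapply diff_along_eq; first by rewrite /tau; diff_along_poly. by rewrite /dtau; ring. Qed.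

Lemma diff_along_rho : diff_along (rho i) x v drho.
Proof.
have rho_neq0 : rho i x != 0 by rewrite gt_eqF.
have rhoE (p : 'rV[R]_5) : rho i p = Num.sqrt (y1 p * y1 p + y2 p * y2 p + y3 i p * y3 i p).
  by rewrite /rho !expr2.
rewrite (boolp.funext rhoE); eapply diff_along_eq.
  apply: diff_along_sqrt; first by rewrite -!expr2 -sqrtr_gt0.
  repeat first [ apply: diff_along_y1 | apply: diff_along_y2 | apply: diff_along_y3
               | apply: diff_alongD | apply: diff_alongM ].
by rewrite -rhoE /drho; field.
Qed.

Lemma diff_along_sinc : diff_along (sinc i) x v dsinc.
Proof.
have rho_neq0 : rho i x != 0 by rewrite gt_eqF.
eapply diff_along_eq.
  rewrite /sinc; apply: diff_alongM; first exact: diff_along_sin diff_along_rho.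
  exact: diff_alongV diff_along_rho.
by rewrite /dsinc /sinc; field.
Qed.

Lemma dExpi : 'd (Expi i) x v =
  quat omega0 omega1 omega2 omega3 (expR (tau x) * dtau)
  *m quat (cos (theta x)) 0 0 (- sin (theta x)) 1.
Proof.
rewrite (boolp.funext (@Expi_closed R i)).
under eq_fun do rewrite quatM quat_basis.
eapply eq_trans.
  apply: diff_alongE; repeat first
    [ apply: diff_along_y1 | apply: diff_along_y2 | apply: diff_along_y3
    | apply: diff_along_rho | apply: diff_along_sinc | apply: diff_along_theta
    | apply: diff_along_tau | apply: diff_alongD | apply: diff_alongM
    | apply: diff_alongZl | apply: diff_alongN | apply: diff_along_cst
    | apply: diff_along_sin | apply: diff_along_cos | apply: diff_along_expR ].
rewrite quatM !quatZ !quatD; congr quat; rewrite /omega0 /omega1 /omega2 /omega3; ring.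
Qed.

Lemma dExpi_eq0 : 'd (Expi i) x v = 0 <->
  [/\ omega0 = 0, omega1 = 0, omega2 = 0, omega3 = 0 & dtau = 0].
Proof.
rewrite dExpi; split=> [dE | [-> -> -> -> ->]]; last by rewrite mulr0 quat0 mul0mx.
have := congr1 (mulmx^~ (quat (cos (theta x)) 0 0 (sin (theta x)) 1)) dE.
rewrite -mulmxA quat_rotK ?cos2Dsin2 // mulmx1 mul0mx => /quat_eq0 [-> -> -> -> /eqP].
by rewrite mulf_eq0 gt_eqF ?expR_gt0 //= => /eqP.
Qed.
End ExpiDifferential.

Section Kernel.
Variables (R : realType) (i : nat) (x : 'rV[R]_5).
Hypotheses (t_gt0 : 0 < crd x 4)
  (x_sphere : crd x 0 ^+ 2 + crd x 1 ^+ 2 + crd x 2 ^+ 2 = 1)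
  (x_off_axis : 0 < crd x 0 ^+ 2 + crd x 2 ^+ 2).

Local Notation r := (rho i x).

Lemma y12_gt0 : 0 < y1 x ^+ 2 + y2 x ^+ 2.
Proof.
have -> : y1 x ^+ 2 + y2 x ^+ 2 = (crd x 4 / 2) ^+ 2 * (crd x 0 ^+ 2 + crd x 2 ^+ 2).
  by rewrite /y1 /y2; ring.
by rewrite mulr_gt0 // exprn_gt0 // divr_gt0.
Qed.

Lemma rho_gt0 : 0 < r.
Proof.
rewrite sqrtr_gt0; apply: lt_le_trans y12_gt0 _.
by rewrite lerDl sqr_ge0.
Qed.

Lemma tangentC_dcoord_eq0 v : tangentC x v ->
  dy1 x v = 0 -> dy2 x v = 0 -> dtheta x v = 0 -> dtau x v = 0 -> v = 0.
Proof.
move=> v_tan dy1_0 dy2_0 dtheta0 dtau0.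
have dt0 : crd v 4 = 0.
  have : crd v 4 * (crd x 0 ^+ 2 + crd x 1 ^+ 2 + crd x 2 ^+ 2) =
      2 * (crd x 0 * dy1 x v + crd x 2 * dy2 x v) + crd x 1 * dtau x v
      - crd x 4 * (crd x 0 * crd v 0 + crd x 1 * crd v 1 + crd x 2 * crd v 2).
    by rewrite /dy1 /dy2 /dtau; field.
  by rewrite x_sphere dy1_0 dy2_0 dtau0 v_tan; lra.
have t_cancel e : crd x 4 * e = 0 -> e = 0.
  by move/eqP; rewrite mulf_eq0 gt_eqF //= => /eqP.
move: dy1_0 dy2_0 dtheta0 dtau0; rewrite /dy1 /dy2 /dtheta /dtau dt0 => ? ? ? ?.
by apply: crd_eq0 => //; apply: t_cancel; lra.
Qed.

Lemma omega_eq0_dcoord_eq0 v : sin r != 0 -> sin r != r * cos r ->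
  omega0 i x v = 0 -> omega1 i x v = 0 -> omega2 i x v = 0 -> omega3 i x v = 0 ->
  dtau x v = 0 -> [/\ dy1 x v = 0, dy2 x v = 0 & dtheta x v = 0].
Proof.
move=> s_neq0 s_neq_rc o0 o1 o2 o3 dtau0.
have r_neq0 : r != 0 by rewrite gt_eqF ?rho_gt0.
have sinc_neq0 : sinc i x != 0 by rewrite mulf_neq0 ?invr_eq0.
have dy3E : dy3 i x v = dtheta x v.
  have -> : dy3 i x v = dtheta x v - tilt R i * dtau x v / 2.
    by rewrite /dy3 /dtheta /dtau; ring.
  by rewrite dtau0 mulr0 mul0r subr0.
have ydy12 : y1 x * dy1 x v + y2 x * dy2 x v = 0.
  have : omega0 i x v * r = - sin r * (y1 x * dy1 x v + y2 x * dy2 x v).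
    by rewrite /omega0 /drho /sinc dy3E; field.
  by rewrite o0 mul0r => /esym/eqP; rewrite mulf_eq0 oppr_eq0 (negbTE s_neq0) => /eqP.
have dsinc0 : dsinc i x v = 0.
  have : omega1 i x v * y1 x + omega2 i x v * y2 x =
      dsinc i x v * (y1 x ^+ 2 + y2 x ^+ 2) + sinc i x * (y1 x * dy1 x v + y2 x * dy2 x v).
    by rewrite /omega1 /omega2; ring.
  rewrite o1 o2 ydy12 !mul0r addr0 mulr0 addr0 => /esym/eqP.
  by rewrite mulf_eq0 (gt_eqF y12_gt0) orbF => /eqP.
have dtheta0 : dtheta x v = 0.
  have : omega3 i x v * r = dtheta x v * (sin r - r * cos r).
    by rewrite /omega3 dsinc0 dy3E /sinc; field.
  by rewrite o3 mul0r => /esym/eqP; rewrite mulf_eq0 subr_eq0 (negbTE s_neq_rc) orbF => /eqP.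
move: o1 o2; rewrite /omega1 /omega2 dsinc0 dtheta0 !mul0r !add0r !subr0 !addr0.
have sinc_cancel e : sinc i x * e = 0 -> e = 0.
  by move/eqP; rewrite mulf_eq0 (negbTE sinc_neq0) => /eqP.
by move=> /sinc_cancel -> /sinc_cancel ->.
Qed.

Lemma dExpi_ker_trivial v : sin r != 0 -> sin r != r * cos r ->
  tangentC x v -> 'd (Expi i) x v = 0 -> v = 0.
Proof.
move=> s_neq0 s_neq_rc v_tan /(dExpi_eq0 v rho_gt0).
case=> o0 o1 o2 o3 dtau0.
have [dy1_0 dy2_0 dtheta0] := omega_eq0_dcoord_eq0 s_neq0 s_neq_rc o0 o1 o2 o3 dtau0.
exact: tangentC_dcoord_eq0.
Qed.

Definition kernel_dir (db : R) : 'rV[R]_5 :=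
  \row_(k < 5) [:: crd x 2; 0; - crd x 0; db; 0]`_k.

Lemma kernel_dir_neq0 db : kernel_dir db != 0.
Proof.
apply/eqP => /(congr1 (fun w => crd w 0 ^+ 2 + crd w 2 ^+ 2)).
rewrite !crd_row // /crd !mxE /= sqrrN expr0n addr0 addrC => x_axis.
by move: x_off_axis; rewrite x_axis ltxx.
Qed.

Lemma kernel_dir_tangent db : tangentC x (kernel_dir db).
Proof. by rewrite /tangentC !crd_row //=; ring. Qed.

Lemma dExpi_kernel_dir_sin0 : sin r = 0 -> 'd (Expi i) x (kernel_dir 0) = 0.
Proof.
move=> s0; have r_neq0 : r != 0 by rewrite gt_eqF ?rho_gt0.
apply/(dExpi_eq0 _ rho_gt0).
rewrite /omega0 /omega1 /omega2 /omega3 /dsinc /drho /sinc /dy1 /dy2 /dy3 /dtheta /dtau.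
by rewrite /y1 /y2 /y3 !crd_row //= s0; split; field.
Qed.

Lemma dExpi_kernel_dir_tan : sin r = r * cos r ->
  'd (Expi i) x (kernel_dir (2 / crd x 4)) = 0.
Proof.
move=> s_rc; have r_neq0 : r != 0 by rewrite gt_eqF ?rho_gt0.
have t_neq0 : crd x 4 != 0 by rewrite gt_eqF.
apply/(dExpi_eq0 _ rho_gt0).
rewrite /omega0 /omega1 /omega2 /omega3 /dsinc /drho /sinc /dy1 /dy2 /dy3 /dtheta /dtau.
by rewrite /y1 /y2 /y3 !crd_row //= s_rc; split; field; rewrite ?r_neq0 ?t_neq0.
Qed.
End Kernel.

Lemma rho_row (R : realType) i (a1 a2 a3 b t : R) : i = 1%N \/ i = 2%N ->
  a1 ^+ 2 + a2 ^+ 2 + a3 ^+ 2 = 1 -> 0 <= t ->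
  rho i (\row_(k < 5) [:: a1; a2; a3; b; t]`_k) = wi i a2 b * t / 2.
Proof.
move=> hi a_sphere t_ge0.
have sqrt_scale z : Num.sqrt ((t * a1 / 2) ^+ 2 + (t * a3 / 2) ^+ 2 + (t * z / 2) ^+ 2)
    = Num.sqrt (1 - a2 ^+ 2 + z ^+ 2) * t / 2.
  have -> : (t * a1 / 2) ^+ 2 + (t * a3 / 2) ^+ 2 + (t * z / 2) ^+ 2
      = (t / 2) ^+ 2 * (1 - a2 ^+ 2 + z ^+ 2) by rewrite -a_sphere; ring.
  by rewrite sqrtrM ?sqr_ge0 // sqrtr_sqr ger0_norm ?divr_ge0 // mulrC mulrA.
rewrite /rho /wi /y1 /y2 /y3 /tilt !crd_row //=.
by case: hi => -> /=; rewrite sqrt_scale // ?mul0r ?subr0 ?mul1r.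
Qed.

Lemma sphere_off_poles (R : realType) (a1 a2 a3 : R) :
  a1 ^+ 2 + a2 ^+ 2 + a3 ^+ 2 = 1 -> a2 != 1 -> a2 != -1 -> 0 < a1 ^+ 2 + a3 ^+ 2.
Proof.
move=> a_sphere a2_neq1 a2_neqN1.
have a2_sqr_neq1 : a2 ^+ 2 != 1 by rewrite sqrf_eq1 negb_or a2_neq1 a2_neqN1.
have a1_sqr := sqr_ge0 a1; have a3_sqr := sqr_ge0 a3.
have : a2 ^+ 2 < 1 by rewrite lt_neqAle a2_sqr_neq1 /=; lra.
lra.
Qed.

Unset Implicit Arguments.

Theorem proposition4 (R : realType) (i : nat) (hi : i = 1%N \/ i = 2%N)
  (a1 a2 a3 b : R) (hS : a1 ^+ 2 + a2 ^+ 2 + a3 ^+ 2 = 1)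
  (h2 : a2 != 1 /\ a2 != -1) (t : R) (ht : 0 < t) :
  conjugate_time i a1 a2 a3 b t <->
  let s := wi i a2 b * t / 2 in sin s * (sin s - s * cos s) = 0.
Proof.
rewrite /conjugate_time -(rho_row b hi hS (ltW ht)) /=.
set p := \row_(k < 5) _.
have [c0 c1 c2 c4] : [/\ crd p 0 = a1, crd p 1 = a2, crd p 2 = a3 & crd p 4 = t].
  by rewrite !crd_row.
have t_gt0 : 0 < crd p 4 by rewrite c4.
have p_sphere : crd p 0 ^+ 2 + crd p 1 ^+ 2 + crd p 2 ^+ 2 = 1 by rewrite c0 c1 c2.
have p_off_axis : 0 < crd p 0 ^+ 2 + crd p 2 ^+ 2.
  by rewrite c0 c2; exact: sphere_off_poles hS h2.1 h2.2.
split=> [[v [v_neq0 [v_tan dv0]]] | /eqP].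
  apply/eqP; rewrite mulf_eq0 subr_eq0; apply: contraLR v_neq0 => /norP[s_neq0 s_neq_rc].
  by rewrite negbK (dExpi_ker_trivial t_gt0 p_sphere p_off_axis s_neq0 s_neq_rc v_tan dv0).
rewrite mulf_eq0 subr_eq0 => /orP[/eqP s0 | /eqP s_rc].
  exists (kernel_dir p 0); split; first exact: kernel_dir_neq0.
  by split; [exact: kernel_dir_tangent | exact: dExpi_kernel_dir_sin0].
exists (kernel_dir p (2 / crd p 4)); split; first exact: kernel_dir_neq0.
by split; [exact: kernel_dir_tangent | exact: dExpi_kernel_dir_tan].
Qed.
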